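(* Let $S$ be a finite set of points in the plane whose convex hull is the triangle $ABC$ with $A,B,C\in S$, and suppose $S$ contains at least two points other than $A,B,C$. Let $A_1$ be a point of $S\setminus\{A,B,C\}$ at maximum distance from the line $BC$ among the points of $S\setminus\{A,B,C\}$, and let $A_2$ be a point of $S\setminus\{A,B,C,A_1\}$ at maximum distance from the line $BC$ among the points of $S\setminus\{A,B,C,A_1\}$. Then every triangulation of $S$ contains at least one of the segments $A_1A_2$ or $AA_2$ as an edge.
   Context: A triangulation of a finite planar point set $S$ is a maximal set of straight line segments whose endpoints are in $S$, which contain no point of $S$ other than their endpoints, and any two of which meet at most in a common endpoint. *)

From mathcomp Require Import all_boot all_order all_algebra.
Set Implicit Arguments. Unset Strict Implicit. Unset Printing Implicit Defensive.
Import Order.TTheory GRing.Theory Num.Theory.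
Local Open Scope ring_scope.

Section Plane.
Variable R : rcfType.
Definition pt := (R * R)%type.

(* twice the signed area of the triangle p q r *)
Definition cross (p q r : pt) : R :=
  (q.1 - p.1) * (r.2 - p.2) - (q.2 - p.2) * (r.1 - p.1).

Definition collinear (p q r : pt) : Prop := cross p q r = 0.

(* Euclidean distance from point p to the line through the distinct points b c *)
Definition dist_to_line (p b c : pt) : R :=
  `|cross b c p| / Num.sqrt ((c.1 - b.1) ^+ 2 + (c.2 - b.2) ^+ 2).

Definition in_hull (s : seq pt) (p : pt) : Prop :=
  exists w : nat -> R,
    (forall i, 0 <= w i) /\
    \sum_(i < size s) w i = 1 /\
    p = (\sum_(i < size s) w i * (nth (0, 0) s i).1,
         \sum_(i < size s) w i * (nth (0, 0) s i).2).

(* a segment is given by its two endpoints; (p, q) and (q, p) denote the same segment *)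
Definition seg := (pt * pt)%type.

Definition on_seg (e : seg) (x : pt) : Prop :=
  exists t : R, 0 <= t <= 1 /\
    x = ((1 - t) * e.1.1 + t * e.2.1, (1 - t) * e.1.2 + t * e.2.2).

Definition same_seg (e f : seg) : Prop :=
  e = f \/ e = (f.2, f.1).

Definition is_endpoint (e : seg) (x : pt) : Prop := x = e.1 \/ x = e.2.

Definition admissible_seg (S : seq pt) (e : seg) : Prop :=
  e.1 \in S /\ e.2 \in S /\ e.1 <> e.2 /\
  (forall r, r \in S -> on_seg e r -> is_endpoint e r).

Definition meet_ok (e f : seg) : Prop :=
  forall x, on_seg e x -> on_seg f x -> is_endpoint e x /\ is_endpoint f x.

Definition noncrossing_segs (S : seq pt) (E : seg -> Prop) : Prop :=
  (forall e, E e -> admissible_seg S e) /\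
  (forall e f, E e -> E f -> ~ same_seg e f -> meet_ok e f).

(* triangulation: a maximal such set of segments *)
Definition triangulation (S : seq pt) (E : seg -> Prop) : Prop :=
  noncrossing_segs S E /\
  (forall e, admissible_seg S e ->
     (forall f, E f -> same_seg e f \/ meet_ok e f) ->
     exists f, E f /\ same_seg e f).

Definition has_edge (E : seg -> Prop) (p q : pt) : Prop :=
  exists f, E f /\ same_seg f (p, q).

End Plane.

From mathcomp Require Import all_boot all_order all_algebra.
From mathcomp Require Import ring lra.
From Stdlib Require Import Classical.
Set Implicit Arguments. Unset Strict Implicit. Unset Printing Implicit Defensive.
Import Order.TTheory GRing.Theory Num.Theory.
Local Open Scope ring_scope.

(* Measure heights by the affine function h vanishing on BC with h A = 1; then
   the distance to BC is proportional to h, and by the choice of A2 only A and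
   A1 lie strictly above the level of A2.  A segment from a point P above that
   level down to A2 then contains no other point of S, and an edge crossing it
   must join the other high point to a point at most at the level of A2.
   If A1 is not above A2, nothing can cross A A2, so maximality makes it an
   edge.  If A1 lies on A A2, an edge A W crossing A1 A2 would pass through A1.
   Otherwise, if A A2 is not an edge, some edge A1 W0 crosses it, and an edge
   A W crossing A1 A2 would meet A1 W0 where the two cevians of the triangle
   A A1 A2 meet, strictly between the levels of A2 and A. *)

Section Segments.
Variable R : rcfType.
Implicit Types (p q r x : pt R) (e f : seg R) (S : seq (pt R)).

Definition comb (t : R) p q : pt R :=
  ((1 - t) * p.1 + t * q.1, (1 - t) * p.2 + t * q.2).

Definition affine (h : pt R -> R) :=
  forall t p q, h (comb t p q) = (1 - t) * h p + t * h q.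

Definition crossing_at e f x :=
  [/\ on_seg e x, on_seg f x & ~ (is_endpoint e x /\ is_endpoint f x)].

Lemma on_segP p q x : on_seg (p, q) x <-> exists2 t, 0 <= t <= 1 & x = comb t p q.
Proof. by split=> [[t [t01 ->]] | [t t01 ->]]; exists t. Qed.

Lemma comb0 p q : comb 0 p q = p.
Proof. by case: p => a b; rewrite /comb /=; congr pair; ring. Qed.

Lemma comb1 p q : comb 1 p q = q.
Proof. by case: q => a b; rewrite /comb /=; congr pair; ring. Qed.

Lemma combC t p q : comb (1 - t) q p = comb t p q.
Proof. by rewrite /comb; congr pair; ring. Qed.

Lemma comb_combr a b p q : comb a p (comb b p q) = comb (a * b) p q.
Proof. by rewrite /comb /=; congr pair; ring. Qed.

Lemma comb_combl t u p q : comb t (comb u p q) q = comb (u + t - t * u) p q.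
Proof. by rewrite /comb /=; congr pair; ring. Qed.

Lemma comb_cancel t s p q r : t != 0 -> comb t p q = comb s p r ->
  q = comb (s / t) p r.
Proof.
case: q => q1 q2 t0 [e1 e2]; rewrite /comb /=; congr pair.
- have -> : q1 = ((1 - s) * p.1 + s * r.1 - (1 - t) * p.1) / t by rewrite -e1; field.
  by field.
- have -> : q2 = ((1 - s) * p.2 + s * r.2 - (1 - t) * p.2) / t by rewrite -e2; field.
  by field.
Qed.

Lemma comb_cevians t0 t1 p q r : t0 + t1 - t0 * t1 != 0 ->
  comb (t0 / (t0 + t1 - t0 * t1)) p (comb t1 q r) =
  comb (t1 / (t0 + t1 - t0 * t1)) q (comb t0 p r).
Proof. by move=> D0; rewrite /comb /=; congr pair; field. Qed.

Lemma on_seg_comb p q x a : on_seg (p, q) x -> 0 <= a <= 1 ->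
  on_seg (p, q) (comb a p x).
Proof.
move=> /on_segP[b /andP[b0 b1] ->] /andP[a0 a1]; apply/on_segP.
exists (a * b); last exact: comb_combr.
by rewrite mulr_ge0 ?mulr_ile1.
Qed.

Lemma same_seg_sym e f : same_seg e f -> same_seg f e.
Proof. by case: e f => [a b] [c d] [[-> ->] | [-> ->]]; [left | right]. Qed.

Lemma same_seg_swap p q : same_seg (p, q) (q, p).
Proof. by right. Qed.

Lemma on_seg_same e f x : same_seg e f -> on_seg e x -> on_seg f x.
Proof.
case: f => p q [-> // | ->] /on_segP[t t01 ->]; apply/on_segP.
by exists (1 - t); [lra | rewrite combC].
Qed.

Lemma is_endpoint_same e f x : same_seg e f -> is_endpoint e x -> is_endpoint f x.
Proof. by case: f => p q [-> // | ->] [] ->; [right | left]. Qed.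

Lemma meet_ok_same e e' f f' : same_seg e e' -> same_seg f f' ->
  meet_ok e f -> meet_ok e' f'.
Proof.
move=> ee ff ok x ex fx.
have [] := ok x (on_seg_same (same_seg_sym ee) ex) (on_seg_same (same_seg_sym ff) fx).
by split; [apply: is_endpoint_same ee _ | apply: is_endpoint_same ff _].
Qed.

Lemma admissible_same S e f : same_seg e f -> admissible_seg S e -> admissible_seg S f.
Proof.
case: f => p q [-> // | ->] [/= qS [pS [qp adm]]].
do !split=> //; first by move=> /esym.
by move=> r rS /(on_seg_same (same_seg_swap p q)) /(adm r rS) [] ->; [right | left].
Qed.

Lemma admissible_common_point S p q r x :
  admissible_seg S (p, q) -> admissible_seg S (p, r) ->
  on_seg (p, q) x -> on_seg (p, r) x -> x <> p -> q = r.
Proof.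
move=> adq adr /on_segP[t /andP[t0 t1] ->] /on_segP[s /andP[s0 s1] e] xp.
have tp : 0 < t by rewrite lt0r t0 andbT; apply/eqP => t0'; apply: xp; rewrite t0' comb0.
have sp : 0 < s by rewrite lt0r s0 andbT; apply/eqP => s0'; apply: xp; rewrite e s0' comb0.
clear xp t0 s0; wlog st : q r t s adq adr tp sp t1 s1 e / s <= t.
  move=> wlog; case: (lerP s t) => [|/ltW ts]; first exact: wlog.
  by apply/esym; apply: (wlog r q s t).
have [_ [_ [pq _]]] := adq; have [_ [_ [_ admr]]] := adr.
have qE := comb_cancel (lt0r_neq0 tp) e.
have [/= qp | //] : is_endpoint (p, r) q.
  apply: admr; first by case: adq => _ [].
  apply/on_segP; exists (s / t) => //.
  by rewrite ler_pdivrMr // mul1r st andbT divr_ge0 // ltW.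
by case: pq.
Qed.

Lemma crossing_at_notin S e f x : admissible_seg S e -> admissible_seg S f ->
  crossing_at e f x -> x \notin S.
Proof.
move=> [_ [_ [_ ade]]] [_ [_ [_ adf]]] [ex fx nend]; apply/negP => xS.
by apply: nend; split; [apply: ade | apply: adf].
Qed.

Lemma crossing_at_interior S p q f x :
  admissible_seg S (p, q) -> admissible_seg S f -> crossing_at (p, q) f x ->
  exists2 t, 0 < t < 1 & x = comb t p q.
Proof.
move=> adpq adf cr; have xS := crossing_at_notin adpq adf cr.
case: adpq cr => pS [qS _] [/on_segP[t /andP[t0 t1] xE] _ _].
exists t => //; rewrite !lt_neqAle t0 t1 !andbT; apply/andP; split.
- by apply: contraNneq xS => t0'; rewrite xE -t0' comb0.
- by apply: contraNneq xS => t1'; rewrite xE t1' comb1.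
Qed.

Lemma crossing_at_not_endpoint S p q f x :
  admissible_seg S (p, q) -> admissible_seg S f -> ~ same_seg (p, q) f ->
  crossing_at (p, q) f x -> ~ is_endpoint f p.
Proof.
move=> adpq adf nsame cr; have xS := crossing_at_notin adpq adf cr.
have xp : x <> p by move=> xp; case: adpq xS => pS _; rewrite xp pS.
case: cr => px fx _.
have common g : admissible_seg S (p, g) -> on_seg (p, g) x -> q = g.
  by move=> adg gx; apply: admissible_common_point adpq adg px gx xp.
case: f adf nsame fx => f1 f2 adf nsame fx [/= e | /= e].
- by subst f1; apply: nsame; left; rewrite (common f2).
- subst f2; apply: nsame; right; rewrite /= (common f1) //.
    exact: admissible_same (same_seg_swap _ _) adf.
  exact: on_seg_same (same_seg_swap _ _) fx.
Qed.

Lemma triangulation_crossing S E p q : triangulation S E ->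
  admissible_seg S (p, q) -> ~ has_edge E p q ->
  exists f x, [/\ E f, ~ same_seg (p, q) f & crossing_at (p, q) f x].
Proof.
move=> [_ maxE] adpq noE; apply: NNPP => nocross; apply: noE.
have [f [Ef pqf]] : exists f, E f /\ same_seg (p, q) f.
  apply: maxE adpq _ => f Ef; case: (classic (same_seg (p, q) f)) => [|nsame]; first by left.
  right => x px fx; apply: NNPP => nend; apply: nocross.
  by exists f, x; split.
by exists f; split; last exact: same_seg_sym.
Qed.

End Segments.

Section HighestPoints.
Variables (R : rcfType) (S : seq (pt R)) (E : seg R -> Prop) (h : pt R -> R).
Variables (A A1 A2 : pt R).
Hypotheses (h_affine : affine h) (triE : triangulation S E).
Hypotheses (AS : A \in S) (A1S : A1 \in S) (A2S : A2 \in S).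
Hypotheses (hA : h A = 1) (hA1 : h A1 < 1) (hA2 : h A2 < 1).
Hypothesis above_A2 : forall p, p \in S -> h A2 < h p -> p = A \/ p = A1.

Let edge_admissible f : E f -> admissible_seg S f := triE.1.1 f.

Lemma admissible_to_A2 P : P \in S -> h A2 < h P ->
  (forall r, r \in S -> h A2 < h r -> r <> P -> ~ on_seg (P, A2) r) ->
  admissible_seg S (P, A2).
Proof.
move=> PS hP noin; do !split=> //=.
  by move=> PA2; move: hP; rewrite PA2 ltxx.
move=> r rS rPA2; case: (ltP (h A2) (h r)) => hr.
  by case: (eqVneq r P) => [-> | /eqP rP]; [left | case: (noin r rS hr rP)].
right; move: rPA2 hr => /on_segP[t /andP[t0 t1] ->]; rewrite h_affine => hr.
suff -> : t = 1 by rewrite comb1.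
by apply/eqP; rewrite eq_le t1 /=; nra.
Qed.

Lemma crossing_from_above P f x : P \in S -> h A2 < h P ->
  admissible_seg S (P, A2) -> E f -> ~ same_seg (P, A2) f ->
  crossing_at (P, A2) f x ->
  exists U W, [/\ same_seg f (U, W), U <> P, U = A \/ U = A1,
                  h A2 < h U & h W <= h A2].
Proof.
move=> PS hP adP Ef nsame cr; have adf := edge_admissible Ef.
have [t /andP[_ t1] xE] := crossing_at_interior adP adf cr.
have notP := crossing_at_not_endpoint adP adf nsame cr.
have hx : h A2 < h x by rewrite xE h_affine; nra.
case: f adf notP cr {Ef nsame} => f1 f2 [/= f1S [/= f2S [/= f12 _]]] notP.
case=> _ /on_segP[s /andP[s0 s1] xE'] _; rewrite xE' h_affine in hx.
have P_hi := above_A2 PS hP.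
case: (ltP (h A2) (h f1)) => h1; case: (ltP (h A2) (h f2)) => h2.
- exfalso; move: notP f12.
  by case: P_hi (above_A2 f1S h1) (above_A2 f2S h2) => -> [] -> [] -> notP f12;
    by [apply: notP; left | apply: notP; right | apply: f12].
- by exists f1, f2; split=> //; [left | move=> e; apply: notP; left | exact: above_A2].
- by exists f2, f1; split=> //; [right | move=> e; apply: notP; right | exact: above_A2].
- by exfalso; nra.
Qed.

Lemma edge_A_A2_of_low_A1 : h A1 <= h A2 -> has_edge E A A2.
Proof.
move=> lowA1; have hA_hi : h A2 < h A by rewrite hA.
have only_A r : r \in S -> h A2 < h r -> r = A.
  by move=> rS hr; case: (above_A2 rS hr) => // rA1; move: hr; rewrite rA1 ltNge lowA1.
have adA : admissible_seg S (A, A2).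
  by apply: admissible_to_A2 => // r rS hr /(_ (only_A r rS hr)).
apply: NNPP => /(triangulation_crossing triE adA) [f [x [Ef nsame cr]]].
have [U [W [_ UA UAA1 hU _]]] := crossing_from_above AS hA_hi adA Ef nsame cr.
by case: UAA1 hU => // UA1; rewrite UA1 ltNge lowA1.
Qed.

Lemma admissible_A1_A2 : h A2 < h A1 -> admissible_seg S (A1, A2).
Proof.
move=> hi; apply: admissible_to_A2 => // r rS hr rA1.
case: (above_A2 rS hr) => [-> | //] /on_segP[t /andP[t0 t1] /(congr1 h)].
by rewrite h_affine hA; move: hA1; nra.
Qed.

Lemma edge_A1_A2_of_between : h A2 < h A1 -> on_seg (A, A2) A1 -> has_edge E A1 A2.
Proof.
move=> hi /on_segP[u /andP[u0 u1] A1E]; have adA1 := admissible_A1_A2 hi.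
apply: NNPP => /(triangulation_crossing triE adA1) [f [x [Ef nsame cr]]].
have adf := edge_admissible Ef.
have [t /andP[t0 t1] xE] := crossing_at_interior adA1 adf cr.
have [U [W [fUW UA1 [UA | /UA1 //] _ hW]]] :=
  crossing_from_above A1S hi adA1 Ef nsame cr.
subst U; have [_ xAW _] := cr; move/(on_seg_same fUW): xAW => xAW.
have up : 0 < u.
  by rewrite lt0r u0 andbT; apply/eqP => u0'; move: hA1; rewrite A1E u0' comb0 hA ltxx.
set v := u + t - t * u; have vp : 0 < v by rewrite /v; nra.
(* x lies on A A2 beyond A1, so the segment A W through x passes through A1. *)
have A1_on_AW : on_seg (A, W) A1.
  have -> : A1 = comb (u / v) A x.
    by rewrite {1}A1E xE A1E comb_combl comb_combr divfK ?lt0r_neq0.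
  apply: on_seg_comb xAW _; apply/andP; split; first exact: divr_ge0 u0 (ltW vp).
  by rewrite ler_pdivrMr // mul1r /v; nra.
have [_ [_ [_ admAW]]] := admissible_same fUW adf.
case: (admAW A1 A1S A1_on_AW) => /= A1E'.
- by move: hA1; rewrite A1E' hA ltxx.
- by move: hW; rewrite -A1E' leNgt hi.
Qed.

Lemma cevians_not_meet_ok t0 t1 W0 W : h A2 < h A1 -> 0 < t0 < 1 -> 0 < t1 < 1 ->
  on_seg (A1, W0) (comb t0 A A2) -> on_seg (A, W) (comb t1 A1 A2) -> h W <= h A2 ->
  ~ meet_ok (A1, W0) (A, W).
Proof.
move=> hi /andP[t0p t01] /andP[t1p t11] x0_on x1_on hW ok.
(* y is where the cevians A x1 and A1 x0 of the triangle A A1 A2 meet. *)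
set D := t0 + t1 - t0 * t1; have Dp : 0 < D by rewrite /D; nra.
have frac01 a : 0 <= a -> a <= D -> 0 <= a / D <= 1.
  move=> a0 aD; apply/andP; split; first exact: divr_ge0 a0 (ltW Dp).
  by rewrite ler_pdivrMr // mul1r.
have L01 : 0 <= t0 / D <= 1 by apply: frac01; [exact: ltW | rewrite /D; nra].
have M01 : 0 <= t1 / D <= 1 by apply: frac01; [exact: ltW | rewrite /D; nra].
pose y := comb (t0 / D) A (comb t1 A1 A2).
have yAW : on_seg (A, W) y by exact: on_seg_comb x1_on L01.
have yA1W0 : on_seg (A1, W0) y.
  by rewrite /y comb_cevians ?lt0r_neq0 //; exact: on_seg_comb x0_on M01.
have hx1 : h A2 < h (comb t1 A1 A2) < 1.
  by rewrite h_affine; apply/andP; split; move: hA1 hA2; nra.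
have hy : h A2 < h y < 1.
  have L0 : 0 < t0 / D by rewrite divr_gt0.
  rewrite /y h_affine hA; case/andP: hx1 => ? ?; apply/andP; split; nra.
have [_ [] /= yE] := ok y yA1W0 yAW.
- by move: hy; rewrite yE hA ltxx andbF.
- by move: hy; rewrite yE ltNge hW.
Qed.

Lemma edge_A1_A2_of_crossing_A_A2 : h A2 < h A1 -> ~ on_seg (A, A2) A1 ->
  ~ has_edge E A A2 -> has_edge E A1 A2.
Proof.
move=> hi offA1 noAA2; have hA_hi : h A2 < h A by rewrite hA.
have adA : admissible_seg S (A, A2).
  apply: admissible_to_A2 => // r rS hr rA.
  by case: (above_A2 rS hr) => [/rA | ->].
have [f0 [x0 [Ef0 nsame0 cr0]]] := triangulation_crossing triE adA noAA2.
have [t0 t0_01 x0E] := crossing_at_interior adA (edge_admissible Ef0) cr0.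
have [U0 [W0 [f0UW UA [/UA // | U0E] _ hW0]]] :=
  crossing_from_above AS hA_hi adA Ef0 nsame0 cr0.
subst U0.
have adA1 := admissible_A1_A2 hi.
apply: NNPP => /(triangulation_crossing triE adA1) [f [x1 [Ef nsame cr1]]].
have [t1 t1_01 x1E] := crossing_at_interior adA1 (edge_admissible Ef) cr1.
have [U [W [fUW UA1 [UE | /UA1 //] _ hW]]] :=
  crossing_from_above A1S hi adA1 Ef nsame cr1.
subst U.
have [[_ x0f0 _] [_ x1f _]] := (cr0, cr1).
apply: (cevians_not_meet_ok hi t0_01 t1_01 _ _ hW).
- by rewrite -x0E; exact: on_seg_same f0UW x0f0.
- by rewrite -x1E; exact: on_seg_same fUW x1f.
apply: (meet_ok_same f0UW fUW); apply: (triE.1.2 _ _ Ef0 Ef) => f0f.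
have : is_endpoint (A, W) A1.
  apply: is_endpoint_same fUW _; apply: is_endpoint_same f0f _.
  by apply: is_endpoint_same (same_seg_sym f0UW) _; left.
case=> /= A1E.
- by move: hA1; rewrite A1E hA ltxx.
- by move: hW; rewrite -A1E leNgt hi.
Qed.

Lemma edge_A1_A2_or_A_A2 : has_edge E A1 A2 \/ has_edge E A A2.
Proof.
case: (lerP (h A1) (h A2)) => [low | hi]; first by right; exact: edge_A_A2_of_low_A1.
case: (classic (on_seg (A, A2) A1)) => [on | off].
  by left; exact: edge_A1_A2_of_between.
case: (classic (has_edge E A A2)) => [| no]; first by right.
by left; exact: edge_A1_A2_of_crossing_A_A2.
Qed.

End HighestPoints.

Lemma in_hull_mem (R : rcfType) (s : seq (pt R)) p : p \in s -> in_hull s p.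
Proof.
move=> ps; have ks : (index p s < size s)%N by rewrite index_mem.
pose w i : R := if i == index p s then 1 else 0.
have pick (F : nat -> R) : \sum_(i < size s) w i * F i = F (index p s).
  rewrite (bigD1 (Ordinal ks)) //= /w eqxx mul1r big1 ?addr0 // => i ik.
  by rewrite ifF ?mul0r //; apply: contraNF ik => /eqP ie; apply/eqP/val_inj.
exists w; split; first by move=> i; rewrite /w; case: ifP.
split; first by rewrite -(pick (fun=> 1)); apply: eq_bigr => i _; rewrite mulr1.
rewrite (pick (fun i => (nth (0, 0) s i).1)) (pick (fun i => (nth (0, 0) s i).2)).
by rewrite nth_index //; case: (p).
Qed.

Section Height.
Variables (R : rcfType) (A B C : pt R).

Definition height (p : pt R) : R := cross B C p / cross B C A.

Lemma height_affine : affine height.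
Proof. by move=> t p q; rewrite /height /cross /comb /=; ring. Qed.

Lemma height_B : height B = 0.
Proof. by rewrite /height /cross !subrr !mulr0 subr0 mul0r. Qed.

Lemma height_C : height C = 0.
Proof. by rewrite /height /cross [X in X - _]mulrC subrr mul0r. Qed.

Hypothesis ABC : ~ collinear A B C.

Lemma cross_neq0 : cross B C A != 0.
Proof. by apply/eqP => e; apply: ABC; rewrite /collinear -e /cross; ring. Qed.

Lemma height_A : height A = 1.
Proof. by rewrite /height divff // cross_neq0. Qed.

Lemma height_in_hull p : in_hull [:: A; B; C] p ->
  0 <= height p <= 1 /\ (height p = 1 -> p = A).
Proof.
case=> w [w_ge0 [+ ->]]; rewrite !big_ord_recl !big_ord0 /= !addr0.
move: (w_ge0 0%N) (w_ge0 (bump 0 0)) (w_ge0 (bump 0 (bump 0 0))).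
move: (w 0%N) (w (bump 0 0)) (w (bump 0 (bump 0 0))) => a b c a0 b0 c0 abc.
have -> : height (a * A.1 + (b * B.1 + c * C.1), a * A.2 + (b * B.2 + c * C.2)) = a.
  rewrite /height -[RHS](mulfK cross_neq0); congr (_ / _).
  rewrite /cross /=; have -> : b = 1 - a - c by lra.
  ring.
split; first by apply/andP; split; lra.
move=> a1; have [-> ->] : b = 0 /\ c = 0 by split; lra.
by rewrite a1 !mul0r !mul1r !addr0; case: (A).
Qed.

Lemma dist_to_line_height p : dist_to_line p B C = `|height p| * dist_to_line A B C.
Proof.
by rewrite /dist_to_line /height normrM normfV mulrA divfK ?normr_eq0 ?cross_neq0.
Qed.

Lemma dist_to_line_A_gt0 : 0 < dist_to_line A B C.
Proof.
have BC : (C.1 - B.1) ^+ 2 + (C.2 - B.2) ^+ 2 != 0.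
  rewrite paddr_eq0 ?sqr_ge0 // !sqrf_eq0 !subr_eq0.
  apply/negP => /andP[/eqP e1 /eqP e2]; apply: ABC.
  by rewrite /collinear /cross e1 e2; ring.
apply: divr_gt0; first by rewrite normr_gt0; exact: cross_neq0.
rewrite sqrtr_gt0 lt0r BC /=; exact: addr_ge0 (sqr_ge0 _) (sqr_ge0 _).
Qed.

Lemma height_le_of_dist_le p q : 0 <= height p -> 0 <= height q ->
  dist_to_line p B C <= dist_to_line q B C -> height p <= height q.
Proof.
move=> p0 q0; rewrite (dist_to_line_height p) (dist_to_line_height q).
by rewrite (ger0_norm p0) (ger0_norm q0) ler_pM2r //; exact: dist_to_line_A_gt0.
Qed.

End Height.

Theorem lemma4p3 (R : rcfType) (S : seq (pt R)) (A B C A1 A2 : pt R) :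
  A \in S -> B \in S -> C \in S ->
  ~ collinear A B C ->
  (forall p, in_hull S p <-> in_hull [:: A; B; C] p) ->
  A1 \in S -> A1 \notin [:: A; B; C] ->
  (forall P, P \in S -> P \notin [:: A; B; C] ->
     dist_to_line P B C <= dist_to_line A1 B C) ->
  A2 \in S -> A2 \notin [:: A; B; C; A1] ->
  (forall P, P \in S -> P \notin [:: A; B; C; A1] ->
     dist_to_line P B C <= dist_to_line A2 B C) ->
  forall E : seg R -> Prop, triangulation S E ->
    has_edge E A1 A2 \/ has_edge E A A2.
Proof.
move=> AS _ _ ABC hullS A1S A1n _ A2S A2n dA2 E triE.
have inS p : p \in S -> 0 <= height A B C p <= 1 /\ (height A B C p = 1 -> p = A).
  by move=> pS; apply: height_in_hull => //; apply/hullS/in_hull_mem.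
have h_ge0 p : p \in S -> 0 <= height A B C p by move=> /inS[/andP[]].
have h_lt1 p : p \in S -> p != A -> height A B C p < 1.
  move=> pS pA; have [/andP[_ p1] pE] := inS p pS.
  by rewrite lt_neqAle p1 andbT; exact: contra_neq pE pA.
apply: (edge_A1_A2_or_A_A2 (height_affine A B C) triE AS A1S A2S (height_A ABC)).
- by apply: h_lt1 A1S _; apply: contraNneq A1n => ->; exact: mem_head.
- by apply: h_lt1 A2S _; apply: contraNneq A2n => ->; exact: mem_head.
move=> p pS hp; case: (boolP (p \in [:: A; B; C; A1])) => [|pn].
  rewrite !inE => /or4P[] /eqP pE; [by left | | | by right];
    by move: hp; rewrite pE ?height_B ?height_C ltNge h_ge0.
move: hp; rewrite ltNge height_le_of_dist_le //; [exact: h_ge0 | exact: h_ge0 | exact: dA2].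
Qed.
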